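(* Let $\theta_1>0$, let $n,d$ be positive integers, let $\epsilon\in(0,\frac12)$, and define for real $\lambda\ge2$ $$M(\lambda)=\theta_1\,\lambda\log_2(\lambda)\,\left(\log_2(3n2^d/\epsilon)\right)^{\frac{1}{\lambda-1}+1}.$$ Then $M$ has exactly one local minimum on $[2,\infty)$, and it is the global minimum of $M$ on $[2,\infty)$. *)

From Stdlib Require Export Reals.
Open Scope R_scope.

Definition log2 (x : R) : R := ln x / ln 2.

(* M(lambda) = theta1 * lambda * log2(lambda) * (log2(3 n 2^d / eps))^(1/(lambda-1) + 1).
   The base log2(3 n 2^d / eps) is > 1 under the hypotheses, so Rpower is the
   usual real power. *)
Definition M_fun (theta1 : R) (n d : nat) (eps : R) (lam : R) : R :=
  theta1 * lam * log2 lam *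
  Rpower (log2 (3 * INR n * 2 ^ d / eps)) (1 / (lam - 1) + 1).

Definition is_local_min_on (D : R -> Prop) (f : R -> R) (x : R) : Prop :=
  D x /\ exists delta : R, delta > 0 /\
    forall y : R, D y -> Rabs (y - x) < delta -> f x <= f y.

Definition from2 (x : R) : Prop := 2 <= x.

From Stdlib Require Import Reals Lra.
From Coquelicot Require Import Coquelicot.
Open Scope R_scope.

(* Writing L for the logarithm of the base of the power, M(t) is a positive
   multiple of t ln t exp(L / (t - 1)).  The derivative of the latter has the
   sign of h(t) - L, where h(t) = (t - 1)^2 (ln t + 1) / (t ln t) is strictly
   increasing and unbounded on (1, oo).  Hence M strictly decreases up to the
   point where h crosses L (or 2, if h(2) >= L) and strictly increases after it,
   which makes that point the unique local minimum and the global minimum. *)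

Definition valley_at (a x : R) (f : R -> R) : Prop :=
  a <= x /\
  (forall u v, a <= u -> u < v -> v <= x -> f v < f u) /\
  (forall u v, x <= u -> u < v -> f u < f v).

Lemma valley_at_min a x f y : valley_at a x f -> a <= y -> f x <= f y.
Proof.
  intros [Hax [Hdec Hinc]] Hy.
  destruct (Rtotal_order y x) as [Hyx | [<- | Hxy]].
  - left; apply Hdec; lra.
  - lra.
  - left; apply Hinc; lra.
Qed.

Lemma valley_at_local_min a x f :
  valley_at a x f -> is_local_min_on (fun t => a <= t) f x.
Proof.
  intros Hv; split; [apply Hv |].
  exists 1; split; [lra |].
  intros y Hy _; exact (valley_at_min a x f y Hv Hy).
Qed.

Lemma valley_at_local_min_unique a x f y :
  valley_at a x f -> is_local_min_on (fun t => a <= t) f y -> y = x.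
Proof.
  intros [Hax [Hdec Hinc]] [Hy [delta [Hdelta Hloc]]].
  destruct (Rtotal_order y x) as [Hyx | [Hyx | Hxy]]; [exfalso | exact Hyx | exfalso].
  - set (z := Rmin (y + delta / 2) x).
    assert (Hz : y < z <= y + delta / 2 /\ z <= x).
    { unfold z; split; [split; [apply Rmin_glb_lt; lra | apply Rmin_l] | apply Rmin_r]. }
    assert (Hyz := Hloc z ltac:(lra) ltac:(rewrite Rabs_right; lra)).
    assert (Hzy := Hdec y z Hy ltac:(lra) ltac:(lra)).
    lra.
  - set (z := Rmax (y - delta / 2) x).
    assert (Hz : y - delta / 2 <= z < y /\ x <= z).
    { unfold z; split; [split; [apply Rmax_l | apply Rmax_lub_lt; lra] | apply Rmax_r]. }
    assert (Hyz := Hloc z ltac:(lra) ltac:(rewrite Rabs_left; lra)).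
    assert (Hzy := Hinc z y ltac:(lra) ltac:(lra)).
    lra.
Qed.

Lemma valley_at_scale a x f g K :
  0 < K -> (forall t, a <= t -> g t = K * f t) ->
  valley_at a x f -> valley_at a x g.
Proof.
  intros HK Hg [Hax [Hdec Hinc]].
  split; [exact Hax | split].
  - intros u v Hu Huv Hv; rewrite !Hg by lra.
    apply Rmult_lt_compat_l; [exact HK | apply Hdec; lra].
  - intros u v Hu Huv; rewrite !Hg by lra.
    apply Rmult_lt_compat_l; [exact HK | apply Hinc; lra].
Qed.

Lemma valley_at_of_derive_sign a x f df :
  a <= x ->
  (forall t, a <= t -> is_derive f t (df t)) ->
  (forall t, a <= t < x -> df t < 0) ->
  (forall t, x < t -> 0 < df t) ->
  valley_at a x f.
Proof.
  intros Hax Hder Hneg Hpos.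
  assert (Hmvt : forall u v, a <= u -> u < v ->
            exists c, f v - f u = df c * (v - u) /\ u < c < v).
  { intros u v Hu Huv; apply MVT_cor2; [exact Huv |].
    intros c Hc; apply is_derive_Reals, Hder; lra. }
  split; [exact Hax | split].
  - intros u v Hu Huv Hv.
    destruct (Hmvt u v Hu Huv) as [c [Hc Hcuv]].
    assert (Hdc := Hneg c ltac:(lra)); nra.
  - intros u v Hu Huv.
    destruct (Hmvt u v ltac:(lra) Huv) as [c [Hc Hcuv]].
    assert (Hdc := Hpos c ltac:(lra)); nra.
Qed.

Lemma increasing_crossing (g : R -> R) (a L : R) :
  (forall u v, a <= u -> u < v -> g u < g v) ->
  (forall t, a <= t -> continuity_pt g t) ->
  (exists b, a <= b /\ L <= g b) ->
  exists x, a <= x /\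
    (forall t, a <= t < x -> g t < L) /\ (forall t, x < t -> L < g t).
Proof.
  intros Hinc Hcont [b [Hab HLb]].
  destruct (Rle_lt_dec L (g a)) as [HLa | HaL].
  - exists a; split; [lra | split].
    + intros t Ht; lra.
    + intros t Ht; pose proof (Hinc a t ltac:(lra) Ht); lra.
  - assert (Hb1 : g b < g (b + 1)) by (apply Hinc; lra).
    destruct (Ranalysis5.IVT_interv (fun t => g t - L) a (b + 1)) as [x [Hx Hgx]].
    + intros t Ht; apply continuity_pt_minus;
        [apply Hcont; lra | apply continuity_pt_const; intros ? ?; reflexivity].
    + lra.
    + lra.
    + lra.
    + exists x; split; [lra | split].
      * intros t Ht; pose proof (Hinc t x ltac:(lra) ltac:(lra)); lra.
      * intros t Ht; pose proof (Hinc x t ltac:(lra) Ht); lra.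
Qed.

Lemma ln_gt_0 t : 1 < t -> 0 < ln t.
Proof. intros Ht; rewrite <- ln_1; apply ln_increasing; lra. Qed.

Lemma sub_one_lt_add_one_mul_ln t : 1 < t -> t - 1 < (t + 1) * ln t.
Proof.
  intros Ht.
  assert (Hexp := exp_ineq1_le (- ln t)).
  rewrite exp_Ropp, exp_ln in Hexp by lra.
  assert (Hlb : (t + 1) * (1 - / t) <= (t + 1) * ln t)
    by (apply Rmult_le_compat_l; lra).
  assert (Hgap : (t + 1) * (1 - / t) - (t - 1) = (t - 1) / t) by (field; lra).
  assert (0 < (t - 1) / t) by (apply Rdiv_lt_0_compat; lra).
  lra.
Qed.

Definition cost (L t : R) : R := t * ln t * exp (L / (t - 1)).

Definition cost_threshold (t : R) : R := (t - 1) ^ 2 * (ln t + 1) / (t * ln t).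

Lemma is_derive_cost L t : 1 < t ->
  is_derive (cost L) t
    (exp (L / (t - 1)) * (t * ln t) / (t - 1) ^ 2 * (cost_threshold t - L)).
Proof.
  intros Ht; assert (Hl := ln_gt_0 t Ht).
  unfold cost, cost_threshold; auto_derive.
  - repeat split; lra.
  - replace (t + - (1)) with (t - 1) by ring.
    unfold Rdiv; set (E := exp _); field; lra.
Qed.

Lemma is_derive_cost_threshold t : 1 < t ->
  is_derive cost_threshold t
    ((t ^ 2 - 1) / t ^ 2 + (t - 1) * ((t + 1) * ln t - (t - 1)) / (t * ln t) ^ 2).
Proof.
  intros Ht; assert (Hl := ln_gt_0 t Ht).
  unfold cost_threshold; auto_derive.
  - repeat split; try lra; apply Rgt_not_eq, Rmult_lt_0_compat; lra.
  - field; lra.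
Qed.

Lemma cost_threshold_increasing u v : 1 < u -> u < v ->
  cost_threshold u < cost_threshold v.
Proof.
  intros Hu Huv.
  refine (incr_function _ (Finite 1) p_infty _
            (fun t Ht _ => is_derive_cost_threshold t Ht) _ u v Hu Huv I).
  intros t Ht _; change (1 < t) in Ht.
  assert (Hl := ln_gt_0 t Ht).
  assert (Hlog := sub_one_lt_add_one_mul_ln t Ht).
  apply Rplus_lt_0_compat; apply Rdiv_lt_0_compat.
  - nra.
  - apply pow_lt; lra.
  - nra.
  - apply pow_lt, Rmult_lt_0_compat; lra.
Qed.

Lemma cost_threshold_gt_sub2 t : 1 < t -> t - 2 < cost_threshold t.
Proof.
  intros Ht; assert (Hl := ln_gt_0 t Ht).
  replace (cost_threshold t) with (t - 2 + (/ t + (t - 1) ^ 2 / (t * ln t)))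
    by (unfold cost_threshold; field; lra).
  assert (0 < / t) by (apply Rinv_0_lt_compat; lra).
  assert (0 < (t - 1) ^ 2 / (t * ln t))
    by (apply Rdiv_lt_0_compat; [apply pow_lt | apply Rmult_lt_0_compat]; lra).
  lra.
Qed.

Lemma cost_derive_factor_pos L t : 1 < t ->
  0 < exp (L / (t - 1)) * (t * ln t) / (t - 1) ^ 2.
Proof.
  intros Ht; assert (Hl := ln_gt_0 t Ht).
  apply Rdiv_lt_0_compat; [apply Rmult_lt_0_compat | apply pow_lt]; try lra.
  - apply exp_pos.
  - apply Rmult_lt_0_compat; lra.
Qed.

Lemma cost_valley L : exists x, valley_at 2 x (cost L).
Proof.
  destruct (increasing_crossing cost_threshold 2 L) as [x [Hx [Hbelow Habove]]].
  - intros u v Hu Huv; apply cost_threshold_increasing; lra.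
  - intros t Ht; apply derivable_continuous_pt.
    eexists; apply is_derive_Reals, is_derive_cost_threshold; lra.
  - assert (HL := Rle_abs L); assert (HL0 := Rabs_pos L).
    exists (2 + Rabs L); split; [lra |].
    pose proof (cost_threshold_gt_sub2 (2 + Rabs L) ltac:(lra)); lra.
  - exists x.
    apply (valley_at_of_derive_sign _ _ _
             (fun t => exp (L / (t - 1)) * (t * ln t) / (t - 1) ^ 2
                       * (cost_threshold t - L))); [exact Hx | | |].
    + intros t Ht; apply is_derive_cost; lra.
    + intros t Ht.
      assert (Hf := cost_derive_factor_pos L t ltac:(lra)).
      assert (Hb := Hbelow t Ht); nra.
    + intros t Ht.
      assert (Hf := cost_derive_factor_pos L t ltac:(lra)).
      assert (Ha := Habove t Ht); nra.
Qed.

Lemma M_fun_cost theta1 n d eps t : 1 < t ->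
  M_fun theta1 n d eps t =
  theta1 * exp (ln (log2 (3 * INR n * 2 ^ d / eps))) / ln 2 *
  cost (ln (log2 (3 * INR n * 2 ^ d / eps))) t.
Proof.
  intros Ht; assert (Hln2 := ln_gt_0 2 ltac:(lra)).
  unfold M_fun, Rpower, cost, log2 at 1.
  set (L := ln (log2 _)).
  replace ((1 / (t - 1) + 1) * L) with (L / (t - 1) + L) by (field; lra).
  rewrite exp_plus; field; lra.
Qed.

Theorem mainTheorem9 (theta1 : R) (n d : nat) (eps : R) :
  theta1 > 0 -> (0 < n)%nat -> (0 < d)%nat -> 0 < eps < 1 / 2 ->
  exists x : R,
    is_local_min_on from2 (M_fun theta1 n d eps) x /\
    (forall y : R, is_local_min_on from2 (M_fun theta1 n d eps) y -> y = x) /\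
    (forall y : R, from2 y -> M_fun theta1 n d eps x <= M_fun theta1 n d eps y).
Proof.
  intros Htheta _ _ _.
  set (L := ln (log2 (3 * INR n * 2 ^ d / eps))).
  destruct (cost_valley L) as [x Hcost].
  assert (HK : 0 < theta1 * exp L / ln 2).
  { apply Rdiv_lt_0_compat; [apply Rmult_lt_0_compat; [lra | apply exp_pos] |].
    apply ln_gt_0; lra. }
  assert (HM : valley_at 2 x (M_fun theta1 n d eps)).
  { apply (valley_at_scale _ _ (cost L) _ _ HK); [| exact Hcost].
    intros t Ht; apply M_fun_cost; lra. }
  exists x; split; [| split].
  - exact (valley_at_local_min _ _ _ HM).
  - intros y Hy; exact (valley_at_local_min_unique _ _ _ _ HM Hy).
  - intros y Hy; exact (valley_at_min _ _ _ _ HM Hy).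
Qed.
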